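(* Let $I\subsetneq S$ be a monomial ideal. If $I$ is $k$-clean for some integer $k\ge 0$, then $S/I$ is clean. Conversely, if $S/I$ is clean, then $I$ is $k$-clean for some integer $k\geq 0$.
   Context: $S=K[x_1,\dots,x_n]$ is a polynomial ring over a field $K$. For a monomial $u=x_1^{a_1}\cdots x_n^{a_n}$, $\mathrm{supp}(u)=\{i: a_i>0\}$. For an ideal $I$, $\min(I)$ denotes the set of prime ideals of $S$ that are minimal among primes containing $I$. A monomial $u\neq 1$ with $u\notin I$ is a cleaner monomial of the monomial ideal $I$ if $\min(I+Su)\subseteq \min(I)$. For an integer $k\ge 0$, the class of $k$-clean monomial ideals is defined recursively (as the smallest class closed under the following rule): a proper monomial ideal $I$ is $k$-clean if either $I$ is a prime ideal, or $I$ has no embedded prime ideals (i.e. $\mathrm{Ass}(S/I)=\min(I)$) and there exists a cleaner monomial $u$ of $I$ with $|\mathrm{supp}(u)|\le k+1$ such that both $I:u$ and $I+Su$ are $k$-clean. $S/I$ is clean if there is a chain of $\mathbb{Z}^n$-graded submodules $0=M_0\subset M_1\subset\cdots\subset M_r=S/I$ with multigraded isomorphisms $M_i/M_{i-1}\cong (S/P_i)(-\mathbf{a}_i)$ for some $\mathbf a_i\in\mathbb Z^n$ and monomial prime ideals $P_i$, such that $\{P_1,\dots,P_r\}\subseteq \min(I)$. *)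

From HB Require Import structures.
From mathcomp Require Import all_boot all_order all_algebra.
From mathcomp Require Import mpoly.
Set Implicit Arguments. Unset Strict Implicit. Unset Printing Implicit Defensive.
Import Order.TTheory GRing.Theory Num.Theory.
Local Open Scope ring_scope.

Section Defs.
Variables (K : fieldType) (n : nat).

Local Notation S := {mpoly K[n]}.

Local Notation subS := (S -> Prop).

Definition incl (A B : subS) : Prop := forall f, A f -> B f.

Definition is_idealS (I : subS) : Prop :=
  [/\ I 0, (forall f g, I f -> I g -> I (f + g)) &
      (forall r f, I f -> I (r * f))].

Definition proper_idealS (I : subS) : Prop := is_idealS I /\ ~ I 1.

Definition gen_by_monomials (G : 'X_{1..n} -> Prop) : subS :=
  fun f => exists s : seq (S * 'X_{1..n}),
      (forall p, p \in s -> G p.2) /\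
      f = \sum_(p <- s) p.1 * 'X_[p.2].

Definition monomial_ideal (I : subS) : Prop :=
  exists G, forall f, I f <-> gen_by_monomials G f.

Definition prime_idealS (P : subS) : Prop :=
  [/\ is_idealS P, ~ P 1 & (forall f g, P (f * g) -> P f \/ P g)].

Definition min_prime (I P : subS) : Prop :=
  [/\ prime_idealS P, incl I P &
      (forall Q, prime_idealS Q -> incl I Q -> incl Q P -> incl P Q)].

Definition ass_prime (I P : subS) : Prop :=
  prime_idealS P /\ exists f : S, forall g, P g <-> I (g * f).

Definition no_embedded (I : subS) : Prop :=
  forall P, ass_prime I P <-> min_prime I P.

Definition sum_mono (I : subS) (m : 'X_{1..n}) : subS :=
  fun f => exists g h, I g /\ f = g + h * 'X_[m].

Definition colon_mono (I : subS) (m : 'X_{1..n}) : subS :=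
  fun f => I (f * 'X_[m]).

Definition msupp_set (m : 'X_{1..n}) : {set 'I_n} := [set i | (m i != 0)%N].

Definition cleaner (I : subS) (m : 'X_{1..n}) : Prop :=
  [/\ m != 0%MM, ~ I 'X_[m] &
      (forall P, min_prime (sum_mono I m) P -> min_prime I P)].

Inductive kclean (k : nat) : subS -> Prop :=
| kclean_prime (I : subS) :
    monomial_ideal I -> proper_idealS I -> prime_idealS I -> kclean k I
| kclean_step (I : subS) (m : 'X_{1..n}) :
    monomial_ideal I -> proper_idealS I -> no_embedded I ->
    cleaner I m -> (#|msupp_set m| <= k.+1)%N ->
    kclean k (colon_mono I m) -> kclean k (sum_mono I m) -> kclean k I.

(* Z^n-graded submodules of S/I are the J/I with J an ideal containing I
   which is homogeneous: with every f it contains all its homogeneous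
   components f@_b x^b. *)
Definition graded_ideal (J : subS) : Prop :=
  is_idealS J /\ forall f b, J f -> J (f@_b *: 'X_[b]).

(* x^d for d in Z^n if d in N^n, and 0 otherwise
   (the degree-d component of S is K x^d, resp. 0) *)
Definition monoZ (d : 'I_n -> int) : S :=
  if [forall i, (0 <= d i)%R] then 'X_[[multinom `|d i|%N | i < n]] else 0.

(* Multigraded isomorphism (S/P)(-a) ~= B/A (A \subseteq B ideals):
   phi : S -> B is an S-linear map modulo A, with kernel (mod A) exactly P
   (so it induces an injective map S/P -> B/A), surjective onto B/A, and
   homogeneous of degree 0 from (S/P)(-a): the class of x^b (degree b + a in
   (S/P)(-a)) is sent to an element of degree b + a of B/A. *)
Definition graded_iso (A B P : subS) (a : 'I_n -> int) : Prop :=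
  exists phi : S -> S,
    [/\ (forall f, B (phi f)),
        (forall f g, A (phi (f + g) - (phi f + phi g))),
        (forall r f, A (phi (r * f) - r * phi f)),
        (forall f, A (phi f) <-> P f) /\
        (forall g, B g -> exists f, A (g - phi f)) &
        forall b : 'X_{1..n}, exists c : K,
          A (phi 'X_[b] - c *: monoZ (fun i => (b i)%:Z + a i))].

(* S/I is clean: a chain I = J_0 \subseteq ... \subseteq J_r = S of graded
   ideals (i.e. graded submodules M_i = J_i/I of S/I) with
   J_(i+1)/J_i ~= (S/P_i)(-a_i), P_i a monomial prime in min(I). *)
Definition clean (I : subS) : Prop :=
  exists (r : nat) (J : nat -> subS) (P : nat -> subS) (a : nat -> 'I_n -> int),
    [/\ (forall f, J 0%N f <-> I f),
        (forall f, J r f),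
        (forall i, (i <= r)%N -> graded_ideal (J i)),
        (forall i, (i < r)%N -> incl (J i) (J i.+1)) &
        forall i, (i < r)%N ->
          [/\ monomial_ideal (P i), min_prime I (P i) &
              graded_iso (J i) (J i.+1) (P i) (a i)]].

End Defs.

From HB Require Import structures.
From mathcomp Require Import all_boot all_order all_algebra.
From mathcomp Require Import mpoly.
From mathcomp Require Import ring zify.
From Stdlib Require Import Classical.
Set Implicit Arguments. Unset Strict Implicit. Unset Printing Implicit Defensive.
Import GRing.Theory Num.Theory.
Local Open Scope ring_scope.

(* In a clean filtration of S/I each factor B/A = (S/P)(-a) is
   cyclic; because the isomorphism is multigraded, its generator is, modulo
   A and up to a nonzero scalar, a monomial u, so that A : u = P and
   B = A + Su.  Peeling off the first factor therefore exhibits a monomial u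
   with I : u = P_0 prime and I + Su carrying a clean filtration of smaller
   length; u is a cleaner monomial because every minimal prime of I + Su is
   one of the P_i.  Induction on the length shows that I is n-clean (a
   support has at most n elements).  Conversely, for a cleaner monomial u,
   a clean filtration of S/(I : u), multiplied by u and shifted by its
   degree, runs from I to I + Su, and concatenating it with a clean
   filtration of S/(I + Su) gives one of S/I; its primes lie in min(I)
   because I has no embedded primes and u is cleaner.  In both directions
   one uses that a clean filtration forces Ass(S/I) = min(I): a prime Q
   containing I contains some P_t, and the first such P_t is the
   annihilator of a suitable element of S/I. *)

Lemma ex_least (Pr : nat -> Prop) :
  (exists t, Pr t) -> exists i, Pr i /\ forall s, (s < i)%N -> ~ Pr s.
Proof.
move=> [t Ht]; apply: NNPP => Hnot.
suff: forall k s, (s <= k)%N -> ~ Pr s by move/(_ t t (leqnn t)).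
elim=> [|k IH] s.
  by rewrite leqn0 => /eqP -> H0; apply: Hnot; exists 0%N.
rewrite leq_eqVlt => /orP [/eqP -> Hk|]; last exact: IH.
by apply: Hnot; exists k.+1; split=> // s' /IH; apply.
Qed.

Section CleanFiltrations.
Variables (K : fieldType) (n : nat).
Local Notation S := {mpoly K[n]}.
Implicit Types (A B C I P Q : S -> Prop) (f g h e : S) (m : 'X_{1..n}).

Section IdealLemmas.
Variable I : S -> Prop.
Hypothesis idealI : is_idealS I.

Lemma ideal0 : I 0. Proof. by case: idealI. Qed.

Lemma idealD f g : I f -> I g -> I (f + g).
Proof. by case: idealI => _ HD _; apply: HD. Qed.

Lemma idealMl r f : I f -> I (r * f).
Proof. by case: idealI => _ _ HM; apply: HM. Qed.

Lemma idealMr r f : I f -> I (f * r).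
Proof. by rewrite mulrC; apply: idealMl. Qed.

Lemma idealN f : I f -> I (- f).
Proof. by rewrite -mulN1r; apply: idealMl. Qed.

Lemma idealB f g : I f -> I g -> I (f - g).
Proof. by move=> If Ig; apply: idealD => //; apply: idealN. Qed.

Lemma idealZ c f : I f -> I (c *: f).
Proof. by rewrite -mul_mpolyC; apply: idealMl. Qed.

Lemma idealZ_iff c f : c != 0 -> I (c *: f) <-> I f.
Proof.
move=> c0; split; last exact: idealZ.
by move/(idealZ c^-1); rewrite scalerA mulVf // scale1r.
Qed.

Lemma ideal_congr f g : I (f - g) -> I f <-> I g.
Proof.
move=> Ifg; split=> H.
  have -> : g = f - (f - g) by rewrite opprB addrC subrK.
  exact: idealB.
by rewrite -(subrK g f); apply: idealD.
Qed.

End IdealLemmas.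

Lemma eq_is_idealS I I' : (forall f, I f <-> I' f) -> is_idealS I -> is_idealS I'.
Proof.
move=> E [H0 HD HM]; split; first exact/E.
- by move=> f g /E Hf /E Hg; apply/E; apply: HD.
- by move=> r f /E Hf; apply/E; apply: HM.
Qed.

Lemma eq_prime_idealS I I' : (forall f, I f <-> I' f) -> prime_idealS I -> prime_idealS I'.
Proof.
move=> E [HI H1 HP]; split; [exact: eq_is_idealS E HI | by move/E |].
by move=> f g /E /HP [] Hf; [left|right]; apply/E.
Qed.

Lemma eq_min_prime I P P' : (forall f, P f <-> P' f) -> min_prime I P -> min_prime I P'.
Proof.
move=> E [HP IP minP]; split; [exact: eq_prime_idealS E HP | by move=> f /IP /E |].
move=> Q HQ IQ QP' f /E; by apply: minP => // g /QP' /E.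
Qed.

Lemma eq_monomial_ideal I I' : (forall f, I f <-> I' f) ->
  monomial_ideal I -> monomial_ideal I'.
Proof. by move=> E [G HG]; exists G => f; rewrite -E. Qed.

Lemma min_prime_sub I I' P : incl I I' -> incl I' P -> min_prime I P -> min_prime I' P.
Proof.
move=> II' I'P [HP _ minP]; split=> // Q HQ I'Q; apply: minP => // f /II'; exact: I'Q.
Qed.

Lemma prime_ideal_ideal P : prime_idealS P -> is_idealS P.
Proof. by case. Qed.

(** * Monomials and monomial ideals *)

Lemma monoZ_pos (d : 'I_n -> int) : [forall i, (0 <= d i)%R] ->
  monoZ K d = 'X_[[multinom `|d i|%N | i < n]].
Proof. by rewrite /monoZ => ->. Qed.

Lemma monoZ_neg (d : 'I_n -> int) : ~~ [forall i, (0 <= d i)%R] -> monoZ K d = 0.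
Proof. by rewrite /monoZ => /negbTE ->. Qed.

Lemma monoZ_shift (b : 'X_{1..n}) (a : 'I_n -> int) m :
  [forall i, (0 <= (b i)%:Z + a i)%R] ->
  monoZ K (fun i => (b i)%:Z + (a i + (m i)%:Z)) =
  monoZ K (fun i => (b i)%:Z + a i) * 'X_[m].
Proof.
move=> /forallP pos.
have pos' : [forall i, (0 <= (b i)%:Z + (a i + (m i)%:Z))%R].
  by apply/forallP => i; rewrite addrA; apply: addr_ge0.
rewrite (monoZ_pos pos') monoZ_pos; last exact/forallP.
rewrite -mpolyXD; congr mpolyX; apply/mnmP => i.
by rewrite mnmDE !mnmE; move: (pos i); rewrite addrA; case: (_ + a i).
Qed.

Lemma monoZ_nat (b : 'X_{1..n}) : monoZ K (fun i => (b i)%:Z + 0) = 'X_[b].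
Proof.
rewrite monoZ_pos; last by apply/forallP => i; rewrite addr0.
by congr 'X_[_]; apply/mnmP => i; rewrite mnmE addr0.
Qed.

Lemma mcoeffMX_component h m b :
  (h * 'X_[m])@_b *: 'X_[b] =
  (if (m <= b)%MM then h@_(b - m) *: 'X_[b - m] else 0) * 'X_[m] :> S.
Proof.
case: ifP => Hmb.
  rewrite -{1}(submK Hmb) addmC mcoeffMX -scalerAl -mpolyXD submK //.
have -> : (h * 'X_[m])@_b = 0.
  apply/eqP; rewrite mcoeff_eq0; apply/negP.
  rewrite (perm_mem (msuppMX h m)) => /mapP [m' _ Eb].
  by move: Hmb; rewrite Eb lem_addr.
by rewrite scale0r mul0r.
Qed.

Lemma gen_by_monomials_ideal G : is_idealS (gen_by_monomials (K := K) (n := n) G).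
Proof.
split.
- by exists [::]; rewrite big_nil.
- move=> f g [s1 [H1 ->]] [s2 [H2 ->]]; exists (s1 ++ s2); rewrite big_cat.
  by split=> // p; rewrite mem_cat => /orP [/H1|/H2].
- move=> r f [s [Hs ->]]; exists [seq (r * p.1, p.2) | p <- s]; split.
    by move=> p /mapP [q Hq ->]; exact: Hs q Hq.
  by rewrite big_map mulr_sumr; apply: eq_bigr => p _ /=; rewrite mulrA.
Qed.

Lemma gen_by_monomials_graded G f b : gen_by_monomials G f ->
  gen_by_monomials (K := K) (n := n) G (f@_b *: 'X_[b]).
Proof.
move=> [s [Hs ->]].
exists [seq ((if (p.2 <= b)%MM then p.1@_(b - p.2) *: 'X_[b - p.2] else 0), p.2) | p <- s].
split; first by move=> p /mapP [q Hq ->]; exact: Hs q Hq.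
rewrite big_map raddf_sum scaler_suml.
by apply: eq_bigr => p _ /=; rewrite mcoeffMX_component.
Qed.

Lemma monomial_ideal_ideal I : monomial_ideal I -> is_idealS I.
Proof.
by move=> [G HG]; apply: eq_is_idealS (gen_by_monomials_ideal G) => f; rewrite HG.
Qed.

Lemma monomial_ideal_graded I : monomial_ideal I -> graded_ideal I.
Proof.
move=> monoI; split; first exact: monomial_ideal_ideal.
by case: monoI => G HG f b /HG Hf; apply/HG; apply: gen_by_monomials_graded.
Qed.

Lemma monomial_ideal_sum_mono I m : monomial_ideal I -> monomial_ideal (sum_mono I m).
Proof.
move=> monoI; have idealI := monomial_ideal_ideal monoI.
case: monoI => G HG; exists (fun d => G d \/ d = m) => f; split.
  move=> [g [h [/HG [s [Hs Eg]] ->]]]; exists ((h, m) :: s); split.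
    by move=> p; rewrite in_cons => /orP [/eqP -> | /Hs]; [right | left].
  by rewrite big_cons Eg addrC.
move=> [s [Hs ->]]; elim: s Hs => [|p s IH] Hs.
  by exists 0, 0; rewrite big_nil mul0r addr0; split=> //; apply: ideal0.
have [g [h [Ig Eg]]] : sum_mono I m (\sum_(q <- s) q.1 * 'X_[q.2]).
  by apply: IH => q Hq; apply: Hs; rewrite in_cons Hq orbT.
rewrite big_cons Eg; case: (Hs p (mem_head _ _)) => [Gp|->].
  exists (p.1 * 'X_[p.2] + g), h; split; last by rewrite addrA.
  apply: idealD => //; apply/HG; exists [:: p]; rewrite big_seq1; split=> //.
  by move=> q; rewrite mem_seq1 => /eqP ->.
by exists g, (p.1 + h); split=> //; ring.
Qed.

Lemma card_msupp_set m : (#|msupp_set m| <= n.+1)%N.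
Proof. by apply: leq_trans (max_card _) _; rewrite card_ord. Qed.

(* [(I + A x^m)/I] is a copy of [A/(I : x^m)] shifted by [m]. *)
Definition sum_mul_mono I A m : S -> Prop :=
  fun f => exists g h, I g /\ A h /\ f = g + h * 'X_[m].

Lemma sum_mul_mono_ideal I A m : is_idealS I -> is_idealS A -> is_idealS (sum_mul_mono I A m).
Proof.
move=> idealI idealA; split.
- by exists 0, 0; rewrite mul0r addr0; split; [apply: ideal0 | split=> //; apply: ideal0].
- move=> _ _ [g1 [h1 [I1 [A1 ->]]]] [g2 [h2 [I2 [A2 ->]]]].
  exists (g1 + g2), (h1 + h2); split; first exact: idealD.
  by split; [exact: idealD | ring].
- move=> r _ [g [h [Ig [Ah ->]]]]; exists (r * g), (r * h); split; first exact: idealMl.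
  by split; [exact: idealMl | ring].
Qed.

Lemma sum_mul_mono_graded I A m : graded_ideal I -> graded_ideal A ->
  graded_ideal (sum_mul_mono I A m).
Proof.
move=> [idealI gradedI] [idealA gradedA]; split; first exact: sum_mul_mono_ideal.
move=> _ b [g [h [Ig [Ah ->]]]]; rewrite mcoeffD scalerDl mcoeffMX_component.
exists (g@_b *: 'X_[b]), (if (m <= b)%MM then h@_(b - m) *: 'X_[b - m] else 0).
split; first exact: gradedI; split=> //.
by case: ifP => _; [apply: gradedA | apply: ideal0].
Qed.

Lemma sum_mul_monoT I m f : sum_mul_mono I (fun _ => True) m f <-> sum_mono I m f.
Proof. by split=> [[g [h [Ig [_ ->]]]]|[g [h [Ig ->]]]]; exists g, h. Qed.

(** * Multigraded cyclic factors *)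

(* [B/A] is isomorphic to [S/P] through [1 |-> e]. *)
Definition generates A B P e :=
  [/\ B e, forall f, A (f * e) <-> P f & forall g, B g -> exists h, A (g - h * e)].

Section Generator.
Variables (A B P : S -> Prop) (e : S).
Hypotheses (idealA : is_idealS A) (genE : generates A B P e).

Lemma generates_ideal : is_idealS P.
Proof.
case: genE => _ HP _; apply: (@eq_is_idealS (fun f => A (f * e))) => //.
split=> [|f g Hf Hg|r f Hf]; first by rewrite mul0r; apply: ideal0.
  by rewrite mulrDl; apply: idealD.
by rewrite -mulrA; apply: idealMl.
Qed.

Lemma generates_sub : incl A P.
Proof. by case: genE => _ HP _ f Af; apply/HP; apply: idealMr. Qed.

Lemma generates_mul g f : P g -> B f -> A (g * f).
Proof.
move=> Pg Bf; case: genE => _ HP Hsurj; have [h Hh] := Hsurj f Bf.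
have -> : g * f = g * (f - h * e) + (g * h) * e by ring.
apply: idealD => //; first exact: idealMl.
by apply/HP; rewrite mulrC; apply: (idealMl generates_ideal).
Qed.

Lemma generatesZ e' c : is_idealS B -> incl A B -> c != 0 -> A (e - c *: e') ->
  generates A B P e'.
Proof.
move=> B_ideal AB c0 Ae; case: genE => Be HP Hsurj; split.
- have -> : e' = c^-1 *: (e - (e - c *: e')).
    by rewrite opprB addrC subrK scalerA mulVf // scale1r.
  by apply: idealZ => //; apply: idealB => //; apply: AB.
- move=> f; rewrite -HP -(idealZ_iff idealA _ c0) scalerAr.
  apply: (ideal_congr idealA).
  have -> : f * (c *: e') - f * e = - (f * (e - c *: e')) by ring.
  by apply: (idealN idealA); apply: idealMl.
- move=> g /Hsurj [h Hh]; exists (c *: h).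
  have -> : g - c *: h * e' = (g - h * e) + h * (e - c *: e').
    by rewrite -scalerAl scalerAr; ring.
  by apply: idealD => //; apply: idealMl.
Qed.

End Generator.

Lemma graded_iso_generates A B P a : is_idealS A -> graded_iso A B P a ->
  exists e, generates A B P e /\
    forall b, exists c, A ('X_[b] * e - c *: monoZ K (fun i => (b i)%:Z + a i)).
Proof.
move=> idealA [phi [HB Hadd Hmul [Hker Hsurj] Hdeg]].
have phiM g : A (phi g - g * phi 1) by have := Hmul g 1; rewrite mulr1.
exists (phi 1); split; first split=> // [f|g /Hsurj [h Hh]].
- by rewrite -Hker; symmetry; apply: (ideal_congr idealA (phiM f)).
- exists h; have -> : g - h * phi 1 = (g - phi h) + (phi h - h * phi 1).
    by rewrite addrA subrK.
  exact: idealD.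
- move=> b; have [c Hc] := Hdeg b; exists c.
  set M := c *: _ in Hc *.
  have -> : 'X_[b] * phi 1 - M = (phi 'X_[b] - M) - (phi 'X_[b] - 'X_[b] * phi 1).
    by ring.
  exact: idealB.
Qed.

Lemma graded_iso_monomial A B P a : is_idealS A -> is_idealS B -> incl A B ->
  ~ P 1 -> graded_iso A B P a ->
  exists m, (forall f, colon_mono A m f <-> P f) /\ (forall f, B f <-> sum_mono A m f).
Proof.
move=> idealA B_ideal AB nP1 /(graded_iso_generates idealA) [e [genE Hdeg]].
have nAe : ~ A e.
  by move=> Ae; apply: nP1; case: genE => _ HP _; apply/HP; rewrite mul1r.
have [c Hc] := Hdeg 0%MM; rewrite mpolyX0 mul1r in Hc.
have [Hpos|Hneg] := boolP [forall i, (0 <= ((0%MM : 'X_{1..n}) i)%:Z + a i)%R];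
  last by move: Hc; rewrite monoZ_neg // scaler0 subr0.
rewrite monoZ_pos // in Hc; set m := [multinom _ | i < n] in Hc.
have c0 : c != 0.
  by apply/eqP => c0; apply: nAe; move: Hc; rewrite c0 scale0r subr0.
have [Bu HP Hsurj] := generatesZ idealA genE B_ideal AB c0 Hc.
exists m; split=> f; first exact: HP.
split=> [/Hsurj [h Hh]|[g [h [Ag ->]]]].
  by exists (f - h * 'X_[m]), h; rewrite subrK.
by apply: (idealD B_ideal); [apply: AB | apply: idealMl].
Qed.

Lemma eq_graded_iso A B B' P a : (forall f, B f <-> B' f) ->
  graded_iso A B P a -> graded_iso A B' P a.
Proof.
move=> E [phi [HB Hadd Hmul [Hker Hsurj] Hdeg]]; exists phi.
by split=> // [f|]; [apply/E | split=> // g /E; apply: Hsurj].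
Qed.

Lemma graded_iso_shift I A B P a m : is_idealS I -> is_idealS A ->
  incl (colon_mono I m) A -> graded_iso A B P a ->
  graded_iso (sum_mul_mono I A m) (sum_mul_mono I B m) P (fun j => a j + (m j)%:Z).
Proof.
move=> idealI idealA colA [phi [HB Hadd Hmul [Hker Hsurj] Hdeg]].
have shifted h : A h -> sum_mul_mono I A m (h * 'X_[m]).
  by exists 0, h; rewrite add0r; split=> //; apply: ideal0.
exists (fun f => phi f * 'X_[m]); split.
- by move=> f; exists 0, (phi f); rewrite add0r; split=> //; apply: ideal0.
- by move=> f g /=; rewrite -mulrDl -mulrBl; apply: shifted.
- by move=> r f /=; rewrite mulrA -mulrBl; apply: shifted.
- split=> [f|_ [g0 [h [Ig0 [Bh ->]]]]].
    split=> [[g [h [Ig [Ah E]]]]|/Hker /shifted //]; apply/Hker.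
    have Ad : A (phi f - h) by apply: colA; rewrite /colon_mono mulrBl E addrK.
    exact: (proj2 (ideal_congr idealA Ad) Ah).
  have [f Hf] := Hsurj h Bh; exists f; exists g0, (h - phi f).
  by split=> //; split=> //; ring.
- move=> b; have [c Hc] := Hdeg b.
  have [pos|neg] := boolP [forall i, (0 <= (b i)%:Z + a i)%R].
    exists c; rewrite monoZ_shift // scalerAl -mulrBl; exact: shifted.
  exists 0; rewrite scale0r subr0; apply: shifted.
  by move: Hc; rewrite monoZ_neg // scaler0 subr0.
Qed.

(** * Filtrations *)

Definition filtration A C r (J P : nat -> S -> Prop) (a : nat -> 'I_n -> int) :=
  [/\ forall f, J 0%N f <-> A f, forall f, J r f <-> C f,
      forall i, (i <= r)%N -> graded_ideal (J i),
      forall i, (i < r)%N -> incl (J i) (J i.+1) &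
      forall i, (i < r)%N -> graded_iso (J i) (J i.+1) (P i) (a i)].

Definition clean_filtration I r (J P : nat -> S -> Prop) (a : nat -> 'I_n -> int) :=
  filtration I (fun _ => True) r J P a /\
  forall i, (i < r)%N -> monomial_ideal (P i) /\ min_prime I (P i).

Lemma cleanP I :
  clean I <-> exists r (J P : nat -> S -> Prop) a, clean_filtration I r J P a.
Proof.
split=> [[r [J [P [a [HJ0 HJr HG HI HP]]]]]|[r [J [P [a [[HJ0 HJr HG HI HP] HP']]]]]].
  exists r, J, P, a; split; first by split=> // i /HP [].
  by move=> i /HP [].
exists r, J, P, a; split=> // [f|i Hi]; first exact/HJr.
by have [? ?] := HP' i Hi; split=> //; apply: HP.
Qed.

Section Filtration.
Variables (A C : S -> Prop) (r : nat) (J P : nat -> S -> Prop) (a : nat -> 'I_n -> int).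
Hypothesis F : filtration A C r J P a.

Lemma filtration_ideal i : (i <= r)%N -> is_idealS (J i).
Proof. by case: F => _ _ HG _ _ /HG []. Qed.

Lemma filtration_source_ideal : is_idealS A.
Proof. by case: F => HJ0 _ _ _ _; apply: eq_is_idealS HJ0 (filtration_ideal (leq0n r)). Qed.

Lemma filtration_incl i j : (i <= j)%N -> (j <= r)%N -> incl (J i) (J j).
Proof.
elim: j => [|j IH]; first by rewrite leqn0 => /eqP -> _ f.
rewrite leq_eqVlt => /orP [/eqP -> _ f //|Hij Hj f Hf].
by case: F => _ _ _ HI _; apply: HI => //; apply: IH => //; exact: ltnW.
Qed.

Lemma filtration_source_incl i : (i <= r)%N -> incl A (J i).
Proof. by move=> Hi f; case: F => HJ0 _ _ _ _ /HJ0; apply: filtration_incl. Qed.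

Lemma filtration_generates i : (i < r)%N -> exists e, generates (J i) (J i.+1) (P i) e.
Proof.
move=> Hi; case: F => _ _ _ _ /(_ i Hi).
by case/(graded_iso_generates (filtration_ideal (ltnW Hi))) => e [genE _]; exists e.
Qed.

Lemma filtration_annihilator Q i : (i <= r)%N -> prime_idealS Q ->
  (forall s, (s < i)%N -> ~ incl (P s) Q) ->
  exists2 y, ~ Q y & forall x, J i x -> A (y * x).
Proof.
move=> + [_ nQ1 primeQ]; elim: i => [_ _|i IH Hi HPQ].
  by exists 1 => // x; case: F => HJ0 _ _ _ _ /HJ0; rewrite mul1r.
have [y nQy Hy] := IH (ltnW Hi) (fun s Hs => HPQ s (ltnW Hs)).
have [z [Pz nQz]] : exists z, P i z /\ ~ Q z.
  apply: NNPP => Hnot; apply: (HPQ i (ltnSn i)) => z Pz.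
  by apply: NNPP => nQz; apply: Hnot; exists z.
have [e genE] := filtration_generates Hi.
exists (y * z); first by case/primeQ.
move=> x Jx; rewrite -mulrA; apply: Hy.
exact: (generates_mul (filtration_ideal (ltnW Hi)) genE Pz Jx).
Qed.

Lemma filtration_prime_sup Q : C 1 -> prime_idealS Q -> incl A Q ->
  exists2 t, (t < r)%N & incl (P t) Q.
Proof.
move=> C1 primeQ AQ; apply: NNPP => Hnot.
have [y nQy Hy] := filtration_annihilator (leqnn r) primeQ
  (fun s Hs PsQ => Hnot (ex_intro2 _ _ s Hs PsQ)).
apply: nQy; rewrite -[y]mulr1; apply: AQ; apply: Hy.
by case: F => _ HJr _ _ _; apply/HJr.
Qed.

End Filtration.

Lemma filtration_behead A A' C r (J P : nat -> S -> Prop) a : (forall f, J 1%N f <-> A' f) ->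
  filtration A C r.+1 J P a ->
  filtration A' C r (fun i => J i.+1) (fun i => P i.+1) (fun i => a i.+1).
Proof.
by move=> HJ1 [_ HJr HG HI HP]; split=> // i Hi; [apply: HG | apply: HI | apply: HP].
Qed.

Lemma filtration_head A C r (J P : nat -> S -> Prop) a :
  filtration A C r.+1 J P a -> ~ P 0%N 1 ->
  exists m, (forall f, colon_mono A m f <-> P 0%N f) /\
            (forall f, J 1%N f <-> sum_mono A m f).
Proof.
move=> F nP1; have [HJ0 _ _ HI HP] := F.
have [m [colE sumE]] := graded_iso_monomial (filtration_ideal F (leq0n _))
  (filtration_ideal F (ltn0Sn r)) (HI 0%N (ltn0Sn r)) nP1 (HP 0%N (ltn0Sn r)).
exists m; split=> f; first by rewrite -colE /colon_mono HJ0.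
by rewrite sumE; split=> -[g [h [Jg ->]]]; exists g, h; split=> //; apply/HJ0.
Qed.

Lemma filtration_shift I B r (J P : nat -> S -> Prop) a m : graded_ideal I ->
  filtration (colon_mono I m) B r J P a ->
  filtration I (sum_mul_mono I B m) r (fun i => sum_mul_mono I (J i) m) P
    (fun i j => a i j + (m j)%:Z).
Proof.
move=> [idealI gradedI] F; have [HJ0 HJr HG HI HP] := F; split.
- move=> f; split=> [[g [h [Ig [/HJ0 Ih ->]]]]|If]; first exact: idealD.
  exists f, 0; rewrite mul0r addr0; split=> //; split=> //.
  exact: ideal0 (filtration_ideal F (leq0n r)).
- by move=> f; split=> -[g [h [Ig [/HJr Jh ->]]]];
    exists g, h; split=> //; split=> //; apply/HJr.
- by move=> i Hi; apply: sum_mul_mono_graded => //; apply: HG.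
- by move=> i Hi _ [g [h [Ig [Jh ->]]]]; exists g, h; split=> //; split=> //; apply: HI.
- move=> i Hi; apply: graded_iso_shift (HP i Hi) => //.
    exact: (filtration_ideal F (ltnW Hi)).
  by move=> f /HJ0; apply: (filtration_incl F (leq0n i) (ltnW Hi)).
Qed.

Lemma filtration_cat A B C r1 r2 (J1 P1 J2 P2 : nat -> S -> Prop) a1 a2 :
  filtration A B r1 J1 P1 a1 -> filtration B C r2 J2 P2 a2 ->
  filtration A C (r1 + r2)
    (fun i => if (i < r1)%N then J1 i else J2 (i - r1)%N)
    (fun i => if (i < r1)%N then P1 i else P2 (i - r1)%N)
    (fun i => if (i < r1)%N then a1 i else a2 (i - r1)%N).
Proof.
move=> [H10 H1r HG1 HI1 HP1] [H20 H2r HG2 HI2 HP2].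
have J1r_J20 f : J1 r1 f <-> J2 0%N f by rewrite H1r H20.
split=> /=.
- case: (posnP r1) => [r10 f|_ f]; last exact: H10.
  by rewrite r10 sub0n H20 -H1r r10 H10.
- by move=> f; rewrite ltnNge leq_addr /= addKn.
- move=> i Hi; case: (ltnP i r1) => Hi1; first by apply: HG1; apply: ltnW.
  by apply: HG2; lia.
- move=> i Hi; case: (ltnP i.+1 r1) => Hi1.
    by rewrite (ltnW Hi1); apply: HI1; apply: ltnW.
  case: (ltnP i r1) => Hi2.
    have Er : r1 = i.+1 by apply/eqP; rewrite eqn_leq Hi1 Hi2.
    by rewrite Er subnn => f /(HI1 i Hi2); rewrite -Er => /J1r_J20.
  have -> : (i.+1 - r1 = (i - r1).+1)%N by lia.
  by apply: HI2; lia.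
- move=> i Hi; case: (ltnP i.+1 r1) => Hi1.
    by rewrite (ltnW Hi1); apply: HP1; apply: ltnW.
  case: (ltnP i r1) => Hi2.
    have Er : r1 = i.+1 by apply/eqP; rewrite eqn_leq Hi1 Hi2.
    rewrite Er subnn; apply: eq_graded_iso (HP1 i Hi2) => f.
    by rewrite -Er J1r_J20.
  have -> : (i.+1 - r1 = (i - r1).+1)%N by lia.
  by apply: HP2; lia.
Qed.

Section CleanFiltration.
Variables (I : S -> Prop) (r : nat) (J P : nat -> S -> Prop) (a : nat -> 'I_n -> int).
Hypothesis CF : clean_filtration I r J P a.

Lemma clean_filtration_min_prime Q : min_prime I Q ->
  exists t, [/\ (t < r)%N, forall f, Q f <-> P t f &
                forall s, (s < t)%N -> ~ incl (P s) Q].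
Proof.
case: CF => F HP [primeQ IQ minQ].
have [t0 Ht0 PQ0] := filtration_prime_sup F Logic.I primeQ IQ.
have [t [[Ht PQ] Hleast]] :=
  ex_least (ex_intro (fun t => (t < r)%N /\ incl (P t) Q) t0 (conj Ht0 PQ0)).
exists t; split=> // [f|s Hs PsQ].
  have [_ [primePt IPt _]] := HP t Ht.
  by split; [apply: minQ primePt IPt PQ f | apply: PQ].
by apply: (Hleast s Hs); split=> //; exact: ltn_trans Ht.
Qed.

Lemma clean_filtration_min_ass Q : min_prime I Q -> ass_prime I Q.
Proof.
move=> minQ; have [primeQ _ _] := minQ; have [_ _ prime_mulQ] := primeQ.
have [t [Ht QPt Hleast]] := clean_filtration_min_prime minQ.
case: CF => F _; have [y nQy Hy] := filtration_annihilator F (ltnW Ht) primeQ Hleast.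
have [e [_ Ann _]] := filtration_generates F Ht.
split=> //; exists (y * e) => f; rewrite QPt -Ann; split=> Hf.
  by rewrite mulrCA; apply: Hy.
have : Q (f * y).
  apply/QPt/Ann; rewrite -mulrA; exact: (filtration_source_incl F (ltnW Ht) Hf).
by case/prime_mulQ => [/QPt/Ann | /nQy].
Qed.

Lemma clean_filtration_ass_min Q : ass_prime I Q -> min_prime I Q.
Proof.
case: CF => F HP [primeQ [f Hf]]; have [_ nQ1 prime_mulQ] := primeQ.
have [HJ0 HJr _ _ _] := F.
have nIf : ~ I f by move=> If; apply: nQ1; apply/Hf; rewrite mul1r.
have Jrf : J r f by apply/HJr.
have [s [Jsf Hleast]] := ex_least (ex_intro (J^~ f) r Jrf).
have Hsr : (s <= r)%N by rewrite leqNgt; apply/negP => /Hleast.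
case: s Jsf Hleast Hsr => [/HJ0 //|t] Jtf Hleast Ht.
have idealJt := filtration_ideal F (ltnW Ht).
have [e [_ Ann Hsurj]] := filtration_generates F Ht.
have [h Hh] := Hsurj f Jtf.
have nPh : ~ P t h.
  by move/Ann => Jhe; apply: (Hleast t (ltnSn t)); apply/(ideal_congr idealJt Hh).
have [_ [[_ _ prime_mulPt] IPt minPt]] := HP t Ht.
have QPt : incl Q (P t).
  move=> g /Hf Igf; have : P t (g * h).
    have Hd : J t (g * f - g * (h * e)) by rewrite -mulrBr; apply: (idealMl idealJt).
    apply/Ann; rewrite -mulrA; apply/(ideal_congr idealJt Hd).
    exact: (filtration_source_incl F (ltnW Ht) Igf).
  by case/prime_mulPt => // /nPh.
have IQ : incl I Q by move=> g Ig; apply/Hf; exact: idealMr (filtration_source_ideal F) _ _ Ig.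
have [s Hs PsQ] := filtration_prime_sup F Logic.I primeQ IQ.
have [_ [primePs IPs _]] := HP s Hs.
have PtPs : incl (P t) (P s) by apply: (minPt _ primePs IPs) => x /PsQ /QPt.
by apply: eq_min_prime (HP t Ht).2 => g; split=> [/PtPs /PsQ|/QPt].
Qed.

Lemma clean_filtration_no_embedded : no_embedded I.
Proof.
by move=> Q; split; [apply: clean_filtration_ass_min | apply: clean_filtration_min_ass].
Qed.

End CleanFiltration.

Lemma clean_filtration_behead I r (J P : nat -> S -> Prop) a m :
  clean_filtration I r.+1 J P a -> (forall f, J 1%N f <-> sum_mono I m f) ->
  clean_filtration (sum_mono I m) r (fun i => J i.+1) (fun i => P i.+1) (fun i => a i.+1).
Proof.
move=> [F HP] sumE; split; first exact: filtration_behead sumE F.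
move=> i Hi; have Hi' : (i.+1 < r.+1)%N by [].
have [monoPi minPi] := HP i.+1 Hi'; split=> //.
have [e genE] := filtration_generates F Hi'.
apply: min_prime_sub _ _ minPi => [g Ig|g /sumE Jg].
  by exists g, 0; rewrite mul0r addr0.
apply: (generates_sub (filtration_ideal F (ltnW Hi')) genE).
exact: (filtration_incl F (ltn0Sn i) (ltnW Hi') Jg).
Qed.

Lemma ass_prime_colon I m Q : ass_prime (colon_mono I m) Q -> ass_prime I Q.
Proof.
case=> primeQ [g Hg]; split=> //.
by exists (g * 'X_[m]) => f; rewrite Hg /colon_mono mulrA.
Qed.

(** * k-clean versus clean *)

Lemma clean_prime I : monomial_ideal I -> prime_idealS I -> clean I.
Proof.
move=> monoI primeI; have idealI := monomial_ideal_ideal monoI.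
exists 1%N, (fun i f => if i == 0%N then I f else True), (fun _ => I), (fun _ _ => 0).
split=> //.
- by case=> [|[|i]] // _; apply: monomial_ideal_graded.
- case=> // _; split=> //; first by split=> // Q _ IQ QI.
  exists id; split=> // [f g|r f||b]; try by rewrite subrr; apply: ideal0.
    by split=> // g _; exists g; rewrite subrr; apply: ideal0.
  by exists 1; rewrite monoZ_nat scale1r subrr; apply: ideal0.
Qed.

Lemma clean_step I m : monomial_ideal I -> no_embedded I -> cleaner I m ->
  clean (colon_mono I m) -> clean (sum_mono I m) -> clean I.
Proof.
move=> monoI noembI [_ _ minsum].
move=> /cleanP [r1 [J1 [P1 [a1 [F1 HP1]]]]] /cleanP [r2 [J2 [P2 [a2 [F2 HP2]]]]].
have F1' := filtration_shift (monomial_ideal_graded monoI) F1.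
have F2' : filtration (sum_mul_mono I (fun _ => True) m) (fun _ => True) r2 J2 P2 a2.
  by have [H20 HJr HG HI HP] := F2; split=> // f; rewrite H20 sum_mul_monoT.
apply/cleanP; do 4 eexists; split; first exact: filtration_cat F1' F2'.
move=> i Hi /=; case: (ltnP i r1) => Hi1.
  have [monoP minP] := HP1 i Hi1; split=> //; apply/noembI.
  exact: ass_prime_colon (clean_filtration_min_ass (conj F1 HP1) minP).
have [|monoP minP] := HP2 (i - r1)%N; first lia.
by split=> //; apply: minsum.
Qed.

Lemma kclean_clean k I : kclean k I -> clean I.
Proof.
elim=> {}I; first by move=> monoI _; apply: clean_prime.
move=> m monoI _ noembI cleanerI _ _ cleanCol _ cleanSum.
exact: clean_step cleanerI cleanCol cleanSum.
Qed.

Lemma clean_filtration_kclean r I (J P : nat -> S -> Prop) a :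
  monomial_ideal I -> proper_idealS I -> clean_filtration I r J P a -> kclean n I.
Proof.
elim: r I J P a => [|r IH] I J P a monoI properI CF.
  have [[HJ0 HJr _ _ _] _] := CF; case: properI => _ []; exact/HJ0/HJr.
have [|notprime] := classic (prime_idealS I); first exact: kclean_prime.
have [F HP] := CF; have [HJ0 _ _ _ _] := F.
have [monoP0 [primeP0 IP0 _]] := HP 0%N (ltn0Sn r).
have [_ nP01 _] := primeP0.
have [m [colE sumE]] := filtration_head F nP01.
have P0E f : P 0%N f <-> colon_mono I m f by rewrite colE.
have CF' := clean_filtration_behead CF sumE.
have properSum : proper_idealS (sum_mono I m).
  split; first exact: monomial_ideal_ideal (monomial_ideal_sum_mono m monoI).
  move/sumE => J11; apply: notprime; apply: eq_prime_idealS primeP0 => g.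
  split=> [P0g|/IP0 //]; apply/HJ0; rewrite -[g]mulr1.
  have [e genE] := filtration_generates F (ltn0Sn r).
  exact: (generates_mul (filtration_ideal F (leq0n _)) genE P0g J11).
have cleanerI : cleaner I m.
  split=> [||Q minQ].
  - apply/negP => /eqP m0; apply: notprime; apply: eq_prime_idealS primeP0 => g.
    by rewrite P0E /colon_mono m0 mpolyX0 mulr1.
  - by move=> Im; apply: nP01; apply/colE; rewrite /colon_mono mul1r.
  - have [t [Ht QPt _]] := clean_filtration_min_prime CF' minQ.
    by apply: eq_min_prime (HP t.+1 Ht).2 => g; rewrite QPt.
apply: (kclean_step monoI properI (clean_filtration_no_embedded CF) cleanerI).
- exact: card_msupp_set.
- apply: kclean_prime; first exact: eq_monomial_ideal P0E monoP0.
    split; first exact: eq_is_idealS P0E (prime_ideal_ideal primeP0).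
    by move/colE.
  exact: eq_prime_idealS P0E primeP0.
- exact: IH _ _ _ _ (monomial_ideal_sum_mono m monoI) properSum CF'.
Qed.

End CleanFiltrations.

Theorem theorem2p4 (K : fieldType) (n : nat) (I : {mpoly K[n]} -> Prop) :
  monomial_ideal I -> proper_idealS I ->
  ((exists k : nat, kclean k I) -> clean I) /\
  (clean I -> exists k : nat, kclean k I).
Proof.
move=> monoI properI; split; first by case=> k /kclean_clean.
by case/cleanP=> r [J [P [a CF]]]; exists n; exact: clean_filtration_kclean monoI properI CF.
Qed.
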